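(* Let $R$ be a number ring, $I$ a non-zero ideal of $R$ and $\mathfrak p$ a maximal ideal of $R$. Then $N(\mathfrak p I)\geq N(I)N(\mathfrak p)$.
   Context: A number ring is a subring of a number field (a finite extension of $\mathbb{Q}$). For a non-zero ideal $I$ of $R$, $N(I)=[R:I]$ is its (finite) index as an additive subgroup. *)

From HB Require Import structures.
From mathcomp Require Import all_boot all_order all_algebra all_field.
Set Implicit Arguments. Unset Strict Implicit. Unset Printing Implicit Defensive.
Import GRing.Theory.
Local Open Scope ring_scope.

Section NumberRing.
Variable L : fieldExtType rat.

Definition is_subring (R : L -> Prop) : Prop :=
  [/\ R 1, (forall x y, R x -> R y -> R (x - y)) &
      (forall x y, R x -> R y -> R (x * y))].

Definition is_ideal (R I : L -> Prop) : Prop :=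
  [/\ (forall x, I x -> R x), I 0,
      (forall x y, I x -> I y -> I (x - y)) &
      (forall r x, R r -> I x -> I (r * x))].

Definition nonzero_ideal (I : L -> Prop) : Prop := exists x, I x /\ x != 0.

Definition maximal_ideal (R P : L -> Prop) : Prop :=
  [/\ is_ideal R P, ~ P 1 &
      forall J, is_ideal R J -> (forall x, P x -> J x) ->
        (forall x, J x -> P x) \/ J 1].

Definition prod_ideal (P I : L -> Prop) : L -> Prop :=
  fun z => exists s : seq (L * L),
    (forall ab, ab \in s -> P ab.1 /\ I ab.2) /\
    z = \sum_(ab <- s) ab.1 * ab.2.

(* [R : I] = n as additive groups: there are exactly n cosets of I in R,
   witnessed by a complete system r_0, ..., r_(n-1) of distinct coset
   representatives. *)
Definition has_index (R I : L -> Prop) (n : nat) : Prop :=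
  exists r : 'I_n -> L,
    [/\ (forall i, R (r i)),
        (forall i j, I (r i - r j) -> i = j) &
        (forall x, R x -> exists i, I (x - r i))].

End NumberRing.

(* Since R/I is finite, I contains a positive integer m.  The quotient R/mR
   is finite: for a prime l, elements of R that are linearly independent
   modulo lR over F_l are, by descent, linearly independent over Q, so there
   are at most [L : Q] of them, and a maximal such family spans R/lR.  Hence
   I is a finitely generated R-module, and the determinant trick (Nakayama)
   gives some y in I outside PI, P being proper.  The elements a + b y, with
   a running through representatives of R/I and b through representatives
   of R/P, are pairwise incongruent modulo PI: a congruence forces a = a'
   modulo I, and then (b - b') y lies in PI, which by maximality of P is
   only possible if b - b' lies in P. *)

From mathcomp Require Import all_boot all_order all_algebra all_field.
From mathcomp Require Import ring.
From Stdlib Require Import Classical.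
Set Implicit Arguments. Unset Strict Implicit. Unset Printing Implicit Defensive.
Import GRing.Theory Num.Theory.
Local Open Scope ring_scope.

Section SubringIdeal.
Variables (L : fieldExtType rat) (R : L -> Prop).
Hypothesis hR : is_subring R.

Lemma subring1 : R 1. Proof. by case: hR. Qed.

Lemma subringB x y : R x -> R y -> R (x - y). Proof. by case: hR => _ + _; apply. Qed.

Lemma subringM x y : R x -> R y -> R (x * y). Proof. by case: hR => _ _; apply. Qed.

Lemma subring0 : R 0. Proof. by rewrite -(subrr 1); apply: subringB; apply: subring1. Qed.

Lemma subringN x : R x -> R (- x).
Proof. by move=> Rx; rewrite -sub0r; apply: subringB => //; apply: subring0. Qed.

Lemma subringD x y : R x -> R y -> R (x + y).
Proof. by move=> Rx Ry; rewrite -[y]opprK; apply: subringB => //; apply: subringN. Qed.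

Lemma subring_sum (I : Type) (r : seq I) (Q : pred I) (F : I -> L) :
  (forall i, Q i -> R (F i)) -> R (\sum_(i <- r | Q i) F i).
Proof. by apply: big_ind; [apply: subring0 | apply: subringD]. Qed.

Lemma subring_prod (I : Type) (r : seq I) (Q : pred I) (F : I -> L) :
  (forall i, Q i -> R (F i)) -> R (\prod_(i <- r | Q i) F i).
Proof. by apply: big_ind; [apply: subring1 | apply: subringM]. Qed.

Lemma subring_nat n : R n%:R.
Proof. by rewrite -[n]card_ord -sumr_const; apply: subring_sum => _ _; apply: subring1. Qed.

Lemma subring_int (z : int) : R z%:~R.
Proof. by case: z => n; rewrite ?NegzE ?mulrNz; [|apply: subringN]; apply: subring_nat. Qed.

Lemma subringMz x (z : int) : R x -> R (x *~ z).
Proof. by move=> Rx; rewrite -mulrzr; apply: subringM => //; apply: subring_int. Qed.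

Lemma subringX x n : R x -> R (x ^+ n).
Proof. by move=> Rx; rewrite -[n]card_ord -prodr_const; apply: subring_prod. Qed.

Variable J : L -> Prop.
Hypothesis hJ : is_ideal R J.

Lemma ideal_subring x : J x -> R x. Proof. by case: hJ => + _ _ _; apply. Qed.

Lemma ideal0 : J 0. Proof. by case: hJ. Qed.

Lemma idealB x y : J x -> J y -> J (x - y). Proof. by case: hJ => _ _ + _; apply. Qed.

Lemma ideal_mull r x : R r -> J x -> J (r * x). Proof. by case: hJ => _ _ _; apply. Qed.

Lemma ideal_mulr r x : R r -> J x -> J (x * r).
Proof. by move=> Rr Jx; rewrite mulrC; apply: ideal_mull. Qed.

Lemma idealN x : J x -> J (- x).
Proof. by move=> Jx; rewrite -sub0r; apply: idealB => //; apply: ideal0. Qed.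

Lemma idealD x y : J x -> J y -> J (x + y).
Proof. by move=> Jx Jy; rewrite -[y]opprK; apply: idealB => //; apply: idealN. Qed.

Lemma ideal_sum (I : Type) (r : seq I) (Q : pred I) (F : I -> L) :
  (forall i, Q i -> J (F i)) -> J (\sum_(i <- r | Q i) F i).
Proof. by apply: big_ind; [apply: ideal0 | apply: idealD]. Qed.

Lemma ideal_subr_trans x y z : J (x - y) -> J (z - y) -> J (x - z).
Proof.
move=> Jxy Jzy; have -> : x - z = (x - y) - (z - y) by ring.
exact: idealB.
Qed.

End SubringIdeal.

Lemma rat_clear_denominators (I : finType) (k : I -> rat) :
  exists2 D : int, D != 0 & exists c : I -> int, forall i, k i * D%:~R = (c i)%:~R.
Proof.
exists (\prod_i denq (k i)); first by apply/prodf_neq0 => i _; apply: denq_neq0.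
exists (fun i => numq (k i) * \prod_(j | j != i) denq (k j)) => i.
by rewrite (bigD1 i) //= !intrM mulrA numqE.
Qed.

Lemma fieldExt_mulrn_eq0 (L : fieldExtType rat) (x : L) n :
  (x *+ n == 0) = (n == 0%N) || (x == 0).
Proof. by rewrite -scaler_nat scaler_eq0 pnatr_eq0. Qed.

Section FreeModPrime.
Variables (L : fieldExtType rat) (R : L -> Prop).
Hypothesis hR : is_subring R.
Variable l : nat.
Hypothesis l_prime : prime l.

Definition zcomb (y : seq L) (c : nat -> int) : L := \sum_(i < size y) y`_i *~ c i.

(* The images of [y] in [R / l R] are linearly independent over [F_l]. *)
Definition free_mod (y : seq L) := forall c : nat -> int,
  (exists2 r, R r & zcomb y c = r *+ l) -> forall i : 'I_(size y), (l%:Z %| c i)%Z.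

Lemma zcombMn y c k : zcomb y (fun i => c i * k%:Z) = zcomb y c *+ k.
Proof. by rewrite /zcomb -sumrMnl; apply: eq_bigr => i _; rewrite mulrzA. Qed.

Lemma zcomb_rcons y x c : zcomb (rcons y x) c = zcomb y c + x *~ c (size y).
Proof.
rewrite /zcomb size_rcons big_ord_recr /= nth_rcons ltnn eqxx; congr (_ + _).
by apply: eq_bigr => i _; rewrite nth_rcons ltn_ord.
Qed.

(* Descent: a relation whose coefficients are all divisible by [l] can be
   divided by [l]. *)
Lemma free_mod_dvdz y c k : free_mod y -> zcomb y c = 0 ->
  forall i : 'I_(size y), ((l ^ k)%:Z %| c i)%Z.
Proof.
move=> fy; elim: k c => [|k IHk] c c0 i; first by rewrite expn0 dvd1z.
have l_c (j : 'I_(size y)) : (l%:Z %| c j)%Z.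
  by apply: fy; exists 0; [apply: subring0 | rewrite c0 mul0rn].
pose c' j := (c j %/ l%:Z)%Z.
have c'0 : zcomb y c' = 0.
  have : zcomb y c' *+ l = 0.
    by rewrite -zcombMn -c0; apply: eq_bigr => j _; rewrite divzK.
  by move/eqP; rewrite fieldExt_mulrn_eq0 gtn_eqF ?prime_gt0 // => /eqP.
rewrite -(divzK (l_c i)) expnSr PoszM; apply: dvdz_mul (IHk _ c'0 i) _.
exact: dvdzz.
Qed.

Lemma free_mod_zcomb_eq0 y c : free_mod y -> zcomb y c = 0 ->
  forall i : 'I_(size y), c i = 0.
Proof.
move=> fy c0 i; apply/eqP; rewrite -absz_eq0 -leqn0 leqNgt; apply/negP => ci_gt0.
have := dvdn_leq ci_gt0 (free_mod_dvdz `|c i| fy c0 i).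
by rewrite leqNgt ltn_expl ?prime_gt1.
Qed.

Lemma free_mod_free y : free_mod y -> free y.
Proof.
move=> fy; suff: free (in_tuple y) by []; apply/freeP => k k0 i.
have [D D0 [c kc]] := rat_clear_denominators k.
pose c' n := if insub n is Some j then c j else 0.
have c'0 : zcomb y c' = 0.
  rewrite -(scaler0 _ D%:~R) -k0 scaler_sumr; apply: eq_bigr => j _ /=.
  by rewrite /c' valK -scaler_int -kc scalerA mulrC.
have := free_mod_zcomb_eq0 fy c'0 i; rewrite /c' valK.
move/(congr1 (fun z : int => z%:~R : rat)).
by rewrite -kc => /eqP; rewrite mulf_eq0 intr_eq0 (negbTE D0) orbF => /eqP.
Qed.

Lemma free_mod_size y : free_mod y -> (size y <= \dim {:L})%N.
Proof. by move=> /free_mod_free /eqP <-; apply: dimvS; apply: subvf. Qed.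

End FreeModPrime.

Section Residues.
Variables (L : fieldExtType rat) (R : L -> Prop).
Hypothesis hR : is_subring R.

Definition congr_mod (m : nat) (x y : L) := exists2 r, R r & x - y = r *+ m.

Definition residue_cover (m : nat) (T : seq L) :=
  forall x, R x -> exists2 t, t \in T & congr_mod m x t.

Lemma congr_mod_trans m x y z : congr_mod m x y -> congr_mod m y z -> congr_mod m x z.
Proof.
move=> [r Rr xy] [r' Rr' yz]; exists (r + r'); first exact: (subringD hR).
by rewrite mulrnDl -xy -yz; ring.
Qed.

Lemma zcomb_reduce_mod y d m : {in y, forall z, R z} -> (0 < m)%N ->
  exists f : {ffun 'I_(size y) -> 'I_m},
    congr_mod m (zcomb y d) (\sum_(i < size y) y`_i *+ f i).
Proof.
move=> Ry m_gt0; have m0 : m%:Z != 0 by rewrite eqz_nat -lt0n.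
have d_mod_ge0 j : 0 <= (d j %% m%:Z)%Z by apply: modz_ge0.
have d_mod_lt j : (`|(d j %% m%:Z)%Z| < m)%N.
  by rewrite -ltz_nat gez0_abs // ltz_pmod // ltz_nat.
exists [ffun j : 'I_(size y) => Ordinal (d_mod_lt j)].
exists (\sum_(j < size y) y`_j *~ (d j %/ m%:Z)%Z).
  apply: (subring_sum hR) => j _; apply: (subringMz hR); apply: Ry; exact: mem_nth.
rewrite /zcomb -sumrB -sumrMnl; apply: eq_bigr => j _; rewrite ffunE /=.
rewrite pmulrn gez0_abs // {1}(divz_eq (d j) m%:Z); ring.
Qed.

Lemma residue_cover_mul a b Ta Tb : residue_cover a Ta -> residue_cover b Tb ->
  residue_cover (a * b) [seq ta + tb *+ a | ta <- Ta, tb <- Tb].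
Proof.
move=> covA covB x Rx; have [ta Ta_ta [r Rr xta]] := covA x Rx.
have [tb Tb_tb [r' Rr' rtb]] := covB r Rr.
exists (ta + tb *+ a); first exact: allpairs_f.
by exists r' => //; rewrite mulnC mulrnA -rtb mulrnBl -xta; ring.
Qed.

Section Prime.
Variable l : nat.
Hypothesis l_prime : prime l.

Lemma exists_maximal_free_mod : exists y : seq L,
  [/\ {in y, forall z, R z}, free_mod R l y & forall x, R x -> ~ free_mod R l (rcons y x)].
Proof.
apply: NNPP => no_max.
have grow k : exists y : seq L, [/\ size y = k, {in y, forall z, R z} & free_mod R l y].
  elim: k => [|k [y [<- Ry fy]]]; first by exists [::]; split => // c _ [].
  have [x Rx fyx] : exists2 x, R x & free_mod R l (rcons y x).
    apply: NNPP => no_x; apply: no_max; exists y; split => // x Rx fyx.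
    by apply: no_x; exists x.
  exists (rcons y x); split => //; first by rewrite size_rcons.
  by move=> z; rewrite mem_rcons inE => /predU1P [-> //|]; apply: Ry.
have [y [size_y _ fy]] := grow (\dim {:L}).+1.
by have := free_mod_size hR l_prime fy; rewrite size_y ltnn.
Qed.

Lemma not_free_mod_rcons y x : {in y, forall z, R z} -> free_mod R l y -> R x ->
  ~ free_mod R l (rcons y x) -> exists d : nat -> int, congr_mod l x (zcomb y d).
Proof.
move=> Ry fy Rx not_fyx.
have [c [[r Rr yxc] [i l_ci]]] : exists c, (exists2 r, R r & zcomb (rcons y x) c = r *+ l) /\
    exists i : 'I_(size (rcons y x)), ~ (l%:Z %| c i)%Z.
  apply: NNPP => H; apply: not_fyx => c yxc i; apply: NNPP => l_ci.
  by apply: H; exists c; split => //; exists i.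
rewrite zcomb_rcons in yxc.
have yc : zcomb y c = r *+ l - x *~ c (size y) by rewrite -yxc addrK.
have l_cx : ~ (l%:Z %| c (size y))%Z.
  move=> l_cx; apply: l_ci.
  have l_cy : forall j : 'I_(size y), (l%:Z %| c j)%Z.
    apply: fy; exists (r - x *~ (c (size y) %/ l%:Z)%Z).
      by apply: (subringB hR) => //; apply: (subringMz hR).
    by rewrite yc -{1}[c (size y)](divzK l_cx); ring.
  have : (i < (size y).+1)%N by rewrite -(size_rcons y x).
  rewrite ltnS leq_eqVlt => /predU1P [-> //|lt_i_y].
  exact: (l_cy (Ordinal lt_i_y)).
(* The coefficient of [x] is prime to [l], so it is invertible modulo [l]. *)
have [u [v uv1]] := Bezoutz (c (size y)) l%:Z.
have cop : gcdz (c (size y)) l%:Z = 1.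
  by apply/eqP; rewrite -/(coprimez _ _) coprimezE coprime_sym prime_coprime //; apply/negP.
rewrite cop in uv1.
exists (fun j => - (c j * u)), (r *~ u + x *~ v).
  by apply: (subringD hR); apply: (subringMz hR).
have -> : zcomb y (fun j => - (c j * u)) = - zcomb y c *~ u.
  by rewrite /zcomb -sumrN mulrz_suml; apply: eq_bigr => j _; rewrite mulrNz mulrzA mulNrz.
by rewrite -{1}[x]mulr1z -uv1 yc; ring.
Qed.

Lemma residue_cover_prime : exists T, residue_cover l T.
Proof.
have [y [Ry fy maxy]] := exists_maximal_free_mod.
pose comb (f : {ffun 'I_(size y) -> 'I_l}) := \sum_(i < size y) y`_i *+ f i.
exists (codom comb) => x Rx.
have [d xd] := not_free_mod_rcons Ry fy Rx (maxy x Rx).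
have [f df] := zcomb_reduce_mod d Ry (prime_gt0 l_prime).
by exists (comb f); [apply: codom_f | apply: congr_mod_trans xd df].
Qed.

End Prime.

Lemma residue_cover_pos m : (0 < m)%N -> exists T, residue_cover m T.
Proof.
elim/ltn_ind: m => m IHm m_gt0; have [m_gt1|m_le1] := ltnP 1 m; last first.
  have -> : m = 1%N by apply/eqP; rewrite eqn_leq m_le1.
  by exists [:: 0] => x Rx; exists 0; rewrite ?mem_head //; exists x; rewrite ?subr0.
have l_prime := pdiv_prime m_gt1; have l_gt0 := prime_gt0 l_prime.
have [Tl covl] := residue_cover_prime l_prime.
have q_gt0 : (0 < m %/ pdiv m)%N by rewrite divn_gt0 // dvdn_leq // pdiv_dvd.
have [Tq covq] := IHm _ (ltn_Pdiv (prime_gt1 l_prime) m_gt0) q_gt0.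
rewrite -(divnK (pdiv_dvd m)) mulnC.
by eexists; apply: residue_cover_mul covl covq.
Qed.
End Residues.

Section Ideals.
Variables (L : fieldExtType rat) (R : L -> Prop).
Hypothesis hR : is_subring R.

Lemma has_index_card J n (T : finType) (f : T -> L) : is_ideal R J -> has_index R J n ->
  (forall t, R (f t)) -> (forall s t, J (f s - f t) -> s = t) -> (#|T| <= n)%N.
Proof.
move=> hJ [r [_ r_inj cover]] Rf f_inj.
have [g fg] := fin_all_exists (fun t => cover (f t) (Rf t)).
rewrite -[n]card_ord; apply: (@leq_card _ _ g) => s t gst; apply: f_inj.
by apply: (ideal_subr_trans hJ (fg s)); rewrite gst; apply: fg.
Qed.

Lemma has_index_nat J n : is_ideal R J -> has_index R J n -> exists2 m, (0 < m)%N & J m%:R.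
Proof.
move=> hJ indexJ; apply: NNPP => no_nat.
suff : (#|'I_n.+1| <= n)%N by rewrite card_ord ltnn.
apply: (has_index_card (f := fun i : 'I_n.+1 => i%:R) hJ indexJ) => [i|i j Jij].
  exact: (subring_nat hR).
apply: NNPP => neq_ij; apply: no_nat.
have [lt_ij|lt_ji|/val_inj //] := ltngtP i j.
- exists (j - i)%N; first by rewrite subn_gt0.
  by rewrite natrB ?(ltnW lt_ij) // -opprB; apply: (idealN hJ).
- exists (i - j)%N; first by rewrite subn_gt0.
  by rewrite natrB ?(ltnW lt_ji).
Qed.

Definition lin_comb (Q : L -> Prop) (G : seq L) (y : L) :=
  exists2 e : 'I_(size G) -> L, (forall j, Q (e j)) & y = \sum_j e j * G`_j.

Lemma lin_comb0 Q G : Q 0 -> lin_comb Q G 0.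
Proof. by exists (fun => 0) => //; rewrite big1 // => j _; rewrite mul0r. Qed.

Lemma lin_combD Q G y z : (forall a b, Q a -> Q b -> Q (a + b)) ->
  lin_comb Q G y -> lin_comb Q G z -> lin_comb Q G (y + z).
Proof.
move=> QD [e Qe ->] [e' Qe' ->]; exists (fun j => e j + e' j) => [j|]; first exact: QD.
by rewrite -big_split; apply: eq_bigr => j _; rewrite mulrDl.
Qed.

Lemma lin_combM (Q Q' : L -> Prop) G a y : (forall b, Q b -> Q' (a * b)) ->
  lin_comb Q G y -> lin_comb Q' G (a * y).
Proof.
move=> QM [e Qe ->]; exists (fun j => a * e j) => [j|]; first exact: QM.
by rewrite mulr_sumr; apply: eq_bigr => j _; rewrite mulrA.
Qed.

Lemma lin_comb_mem Q G z : Q 0 -> Q 1 -> z \in G -> lin_comb Q G z.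
Proof.
move=> Q0 Q1 Gz; have zG_lt : (index z G < size G)%N by rewrite index_mem.
pose j0 : 'I_(size G) := Ordinal zG_lt.
exists (fun j => if j == j0 then 1 else 0) => [j|]; first by case: ifP.
rewrite (bigD1 j0) //= eqxx mul1r nth_index // big1 ?addr0 // => j /negbTE ->.
by rewrite mul0r.
Qed.

Lemma ideal_fin_gen J m : is_ideal R J -> (0 < m)%N -> J m%:R ->
  exists2 G, {in G, forall z, J z} & forall y, J y -> lin_comb R G y.
Proof.
(* [J] is generated by [m] and one element of [J] in each class of
   [R / m R] that meets [J]. *)
move=> hJ m_gt0 Jm; have [T covT] := residue_cover_pos hR m_gt0.
have rep_i (i : 'I_(size T)) : exists h,
    J h /\ ((exists2 z, J z & congr_mod R m z T`_i) -> congr_mod R m h T`_i).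
  have [[z Jz zT]|no_z] := classic (exists2 z, J z & congr_mod R m z T`_i); first by exists z.
  by exists 0; split=> [|/no_z //]; apply: (ideal0 hJ).
have [h hJh] := fin_all_exists rep_i.
exists (m%:R :: codom h) => [z|y Jy].
  by rewrite inE => /predU1P [-> //|/codomP [i ->]]; case: (hJh i).
have [t Tt [r Rr yt]] := covT y (ideal_subring hJ Jy).
have Tt_lt : (index t T < size T)%N by rewrite index_mem.
pose i : 'I_(size T) := Ordinal Tt_lt.
have [r' Rr' hit] : congr_mod R m (h i) t.
  have [_] := hJh i; rewrite /= nth_index //; apply.
  by exists y => //; exists r.
have -> : y = (r - r') * m%:R + h i by rewrite mulrBl !mulr_natr -yt -hit; ring.
apply: lin_combD; first exact: (subringD hR).
  apply: (lin_combM (Q := R)) => [b Rb|].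
    by apply: (subringM hR) => //; apply: (subringB hR).
  by apply: lin_comb_mem; [apply: (subring0 hR) | apply: (subring1 hR) | apply: mem_head].
apply: lin_comb_mem; [apply: (subring0 hR) | apply: (subring1 hR) |].
by rewrite inE codom_f orbT.
Qed.

End Ideals.

Section DeterminantCongruence.
Variables (L : fieldExtType rat) (R J : L -> Prop).
Hypotheses (hR : is_subring R) (hJ : is_ideal R J).

Lemma ideal_prod_congr (T : Type) (r : seq T) (F G : T -> L) :
  (forall i, R (F i)) -> (forall i, R (G i)) -> (forall i, J (F i - G i)) ->
  J (\prod_(i <- r) F i - \prod_(i <- r) G i).
Proof.
move=> RF RG JFG; elim: r => [|i r IHr]; first by rewrite !big_nil subrr; apply: (ideal0 hJ).
rewrite !big_cons.
have -> : F i * \prod_(j <- r) F j - G i * \prod_(j <- r) G j =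
    F i * (\prod_(j <- r) F j - \prod_(j <- r) G j) + (F i - G i) * \prod_(j <- r) G j by ring.
apply: (idealD hJ); first exact: (ideal_mull hJ).
by apply: (ideal_mulr hJ) => //; apply: (subring_prod hR).
Qed.

Lemma det_congr n (A B : 'M[L]_n) : (forall i j, R (A i j)) -> (forall i j, R (B i j)) ->
  (forall i j, J (A i j - B i j)) -> J (\det A - \det B).
Proof.
move=> RA RB JAB; rewrite /determinant -sumrB; apply: (ideal_sum hJ) => s _.
rewrite -mulrBr; apply: (ideal_mull hJ); last exact: ideal_prod_congr.
by apply: (subringX hR); apply: (subringN hR); apply: (subring1 hR).
Qed.

End DeterminantCongruence.

Section ProductIdeal.
Variables (L : fieldExtType rat) (R I P : L -> Prop).
Hypotheses (hR : is_subring R) (hI : is_ideal R I) (hP : is_ideal R P).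

Lemma prod_ideal_mul a b : P a -> I b -> prod_ideal P I (a * b).
Proof.
move=> Pa Ib; exists [:: (a, b)]; split; last by rewrite big_seq1.
by move=> ab; rewrite inE => /eqP ->.
Qed.

Lemma prod_ideal_sub x : prod_ideal P I x -> I x.
Proof.
move=> [s [Ps ->]]; rewrite big_seq; apply: (ideal_sum hI) => ab /Ps [Pa Ib].
by apply: (ideal_mull hI) => //; apply: (ideal_subring hP).
Qed.

Lemma prod_idealD x y : prod_ideal P I x -> prod_ideal P I y -> prod_ideal P I (x + y).
Proof.
move=> [s [Ps ->]] [s' [Ps' ->]]; exists (s ++ s'); split; last by rewrite big_cat.
by move=> ab; rewrite mem_cat => /orP [/Ps|/Ps'].
Qed.

Lemma prod_idealMl r x : R r -> prod_ideal P I x -> prod_ideal P I (r * x).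
Proof.
move=> Rr [s [Ps ->]]; exists [seq (r * ab.1, ab.2) | ab <- s]; split.
  move=> _ /mapP [ab /Ps [Pa Ib] ->]; split => //; exact: (ideal_mull hP).
by rewrite big_map mulr_sumr; apply: eq_bigr => ab _; rewrite mulrA.
Qed.

Lemma prod_ideal_is_ideal : is_ideal R (prod_ideal P I).
Proof.
split=> [x /prod_ideal_sub /(ideal_subring hI) //||x y Px Py|]; last exact: prod_idealMl.
  by exists [::]; rewrite big_nil.
apply: prod_idealD => //; rewrite -mulN1r; apply: prod_idealMl => //.
by apply: (subringN hR); apply: (subring1 hR).
Qed.

Lemma prod_ideal_lin_comb G z : (forall y, I y -> lin_comb R G y) ->
  prod_ideal P I z -> lin_comb P G z.
Proof.
move=> spanG [s [Ps ->]]; elim: s Ps => [|[a b] s IHs] Ps.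
  by rewrite big_nil; apply: lin_comb0; apply: (ideal0 hP).
have [Pa Ib] : P a /\ I b := Ps (a, b) (mem_head _ _).
rewrite big_cons /=; apply: lin_combD; first exact: (idealD hP).
  by apply: lin_combM (spanG _ Ib) => c Rc; apply: (ideal_mulr hP).
by apply: IHs => ab sab; apply: Ps; rewrite inE sab orbT.
Qed.

Lemma nakayama G : ~ P 1 -> {in G, forall z, prod_ideal P I z} ->
  (forall y, I y -> lin_comb R G y) -> forall y, I y -> y = 0.
Proof.
move=> P1 PIG spanG.
have [A GA] : exists A : 'I_(size G) -> 'I_(size G) -> L,
    forall j, (forall k, P (A j k)) /\ G`_j = \sum_k A j k * G`_k.
  have spanPG (j : 'I_(size G)) : exists e : 'I_(size G) -> L,
      (forall k, P (e k)) /\ G`_j = \sum_k e k * G`_k.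
    have [e Pe ->] := prod_ideal_lin_comb spanG (PIG _ (mem_nth 0 (ltn_ord j))).
    by exists e.
  exact: fin_all_exists spanPG.
pose M := \matrix_(j, k) A j k : 'M[L]_(size G).
pose g := \col_j G`_j : 'cV[L]_(size G).
(* [det (1 - M)] kills [g] and is congruent to [1] modulo [P]. *)
have Mg : (1%:M - M) *m g = 0.
  apply/matrixP => j k; rewrite mulmxBl mul1mx !mxE.
  by under eq_bigr do rewrite !mxE; rewrite -(proj2 (GA j)) subrr.
have detMg : \det (1%:M - M) *: g = 0.
  by rewrite -mul_scalar_mx -mul_adj_mx -mulmxA Mg mulmx0.
have det_neq0 : \det (1%:M - M) != 0.
  apply/eqP => det0; apply: P1.
  have : P (\det (1%:M - M) - \det (1%:M : 'M[L]_(size G))).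
    apply: (det_congr hR hP) => i j; rewrite !mxE.
    - apply: (subringB hR); first exact: (subring_nat hR).
      by apply: (ideal_subring hP); case: (GA i).
    - exact: (subring_nat hR).
    - by rewrite addrAC subrr sub0r; apply: (idealN hP); case: (GA i).
  by rewrite det1 det0 sub0r => /(idealN hP); rewrite opprK.
have g0 : g = 0 by apply/eqP; move/eqP: detMg; rewrite scaler_eq0 (negbTE det_neq0).
move=> y /spanG [e _ ->]; apply: big1 => k _.
by have := congr1 (fun g : 'cV[L]_(size G) => g k 0) g0; rewrite !mxE => ->; rewrite mulr0.
Qed.

Lemma exists_not_prod_ideal n : nonzero_ideal I -> has_index R I n -> ~ P 1 ->
  exists2 y, I y & ~ prod_ideal P I y.
Proof.
move=> [x [Ix x_neq0]] indexI P1; apply: NNPP => PI_eq_I; move/eqP: x_neq0; apply.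
have [m m_gt0 Im] := has_index_nat hR hI indexI.
have [G IG spanG] := ideal_fin_gen hR hI m_gt0 Im.
apply: (@nakayama G P1 _ spanG x Ix) => z Gz; apply: NNPP => PIz.
by apply: PI_eq_I; exists z => //; apply: IG.
Qed.

End ProductIdeal.

Section MaximalIdeal.
Variables (L : fieldExtType rat) (R I P : L -> Prop).
Hypotheses (hR : is_subring R) (hP : maximal_ideal R P).

Lemma maximal_ideal_invertible_mod r : R r -> ~ P r ->
  exists a s, [/\ P a, R s & 1 = a + s * r].
Proof.
have [hPi _ maxP] := hP; move=> Rr Pr.
pose J z := exists a s, [/\ P a, R s & z = a + s * r].
have hJ : is_ideal R J.
  split=> [z [a [s [Pa Rs ->]]]| |z z' [a [s [Pa Rs ->]]] [a' [s' [Pa' Rs' ->]]]|t z Rt].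
  - by apply: (subringD hR); [apply: (ideal_subring hPi) | apply: (subringM hR)].
  - by exists 0, 0; split; [apply: (ideal0 hPi) | apply: (subring0 hR) | ring].
  - exists (a - a'), (s - s'); split; [exact: (idealB hPi) | exact: (subringB hR) | ring].
  - move=> [a [s [Pa Rs ->]]]; exists (t * a), (t * s).
    by split; [exact: (ideal_mull hPi) | exact: (subringM hR) | ring].
have PJ z : P z -> J z by move=> Pz; exists z, 0; split=> //; [apply: (subring0 hR) | ring].
case: (maxP J hJ PJ) => [JP|//]; case: Pr; apply: JP.
by exists 0, 1; split; [apply: (ideal0 hPi) | apply: (subring1 hR) | ring].
Qed.

Lemma maximal_prod_ideal_cancel y r : I y -> ~ prod_ideal P I y -> R r ->
  prod_ideal P I (r * y) -> P r.
Proof.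
have [hPi _ _] := hP; move=> Iy PIy Rr PIry; apply: NNPP => Pr; apply: PIy.
have [a [s [Pa Rs ar1]]] := maximal_ideal_invertible_mod Rr Pr.
rewrite -[y]mul1r ar1 mulrDl -mulrA; apply: prod_idealD; first exact: prod_ideal_mul.
exact: (prod_idealMl hPi).
Qed.

End MaximalIdeal.

Theorem proposition2p7 (L : fieldExtType rat) (R I P : L -> Prop)
  (hR : is_subring R) (hI : is_ideal R I) (hI0 : nonzero_ideal I)
  (hP : maximal_ideal R P) (nI nP nPI : nat)
  (HnI : has_index R I nI) (HnP : has_index R P nP)
  (HnPI : has_index R (prod_ideal P I) nPI) :
  (nI * nP <= nPI)%N.
Proof.
have [hPi P1 _] := hP.
have [y Iy PIy] := exists_not_prod_ideal hR hI hPi hI0 HnI P1.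
have Ry := ideal_subring hI Iy.
have [rI [RrI rI_inj _]] := HnI; have [rP [RrP rP_inj _]] := HnP.
rewrite -[nI]card_ord -[nP]card_ord -card_prod.
apply: (has_index_card (f := fun ij => rI ij.1 + rP ij.2 * y) _ HnPI).
- exact: prod_ideal_is_ideal.
- by move=> [i j]; apply: (subringD hR) => //; apply: (subringM hR).
move=> [i j] [i' j'] /= PI_ij.
have rPy : prod_ideal P I ((rP j - rP j') * y) -> j = j'.
  move/(maximal_prod_ideal_cancel hR hP Iy PIy (subringB hR (RrP j) (RrP j'))).
  exact: rP_inj.
have ii' : i = i'.
  apply: rI_inj.
  have -> : rI i - rI i' =
      (rI i + rP j * y - (rI i' + rP j' * y)) - (rP j - rP j') * y by ring.
  apply: (idealB hI); first exact: (prod_ideal_sub hI hPi PI_ij).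
  by apply: (ideal_mull hI) => //; apply: (subringB hR).
rewrite -ii' in PI_ij *; congr (_, _); apply: rPy.
by have <- : rI i + rP j * y - (rI i + rP j' * y) = (rP j - rP j') * y by ring.
Qed.
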